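(* Let $m_1,m_2\in\mathbb{N}$ be relatively prime, let $\alpha\in\mathbb{R}$, and let $\boldsymbol{\varrho}=\boldsymbol{\varrho}^{(\boldsymbol{m})}_\alpha$ be the rhodonea curve defined below. For $t\in[0,2\pi)$ put $\mathcal{S}(t)=\{s\in[0,2\pi):\ \boldsymbol{\varrho}(s)=\boldsymbol{\varrho}(t)\}$, and let $t_l=\frac{l\pi}{2m_1m_2}$ for $l\in\{0,1,\dots,4m_1m_2-1\}$. If $m_1+m_2$ is odd, then the minimal period of $\boldsymbol{\varrho}$ is $2\pi$ and: (i) $\#\mathcal{S}(t)=2m_2$ if $t=t_l$ for some $l\in\{0,\dots,4m_1m_2-1\}$ with $l\equiv m_1 \pmod{2m_1}$; (ii) $\#\mathcal{S}(t)=2$ if $t=t_l$ for some $l\in\{0,\dots,4m_1m_2-1\}$ with $l\not\equiv 0\pmod{m_1}$; (iii) $\#\mathcal{S}(t)=1$ for all other $t\in[0,2\pi)$. If $m_1+m_2$ is even, then the minimal period of $\boldsymbol{\varrho}$ is $\pi$ and: (i)' $\#\mathcal{S}(t)=2m_2$ if $t=t_l$ for some $l\in\{0,\dots,4m_1m_2-1\}$ with $l\equiv m_1\pmod{2m_1}$; (ii)' $\#\mathcal{S}(t)=4$ if $t=t_{2l}$ for some $l\in\{0,\dots,2m_1m_2-1\}$ with $l\not\equiv 0\pmod{m_1}$; (iii)' $\#\mathcal{S}(t)=2$ for all other $t\in[0,2\pi)$.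
   Context: For $\boldsymbol{m}=(m_1,m_2)\in\mathbb{N}^2$ and $\alpha\in\mathbb{R}$, the rhodonea curve is $\boldsymbol{\varrho}^{(\boldsymbol{m})}_\alpha:\mathbb{R}\to\mathbb{R}^2$, $\boldsymbol{\varrho}^{(\boldsymbol{m})}_\alpha(t)=\big(\cos(m_2t)\cos(m_1t-\alpha\pi),\ \cos(m_2t)\sin(m_1t-\alpha\pi)\big)$. It takes values in the closed unit disk $\mathbb{D}=\{x\in\mathbb{R}^2:|x|\le1\}$. *)

From Stdlib Require Import Reals Lra Lia Arith List.
Import ListNotations.
Open Scope R_scope.

Definition rhodonea (m1 m2 : nat) (alpha : R) (t : R) : R * R :=
  (cos (INR m2 * t) * cos (INR m1 * t - alpha * PI),
   cos (INR m2 * t) * sin (INR m1 * t - alpha * PI)).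

Definition is_period (f : R -> R * R) (p : R) : Prop :=
  forall t : R, f (t + p) = f t.

Definition minimal_period (f : R -> R * R) (T : R) : Prop :=
  0 < T /\ is_period f T /\ (forall p : R, 0 < p -> is_period f p -> T <= p).

Definition S_set (f : R -> R * R) (t : R) (s : R) : Prop :=
  0 <= s < 2 * PI /\ f s = f t.

Definition card_eq (A : R -> Prop) (n : nat) : Prop :=
  exists l : list R, NoDup l /\ length l = n /\ (forall s, In s l <-> A s).

Definition t_node (m1 m2 l : nat) : R :=
  INR l * PI / (2 * INR m1 * INR m2).

From Stdlib Require Import Reals Lra Lia Arith List ZArith Znumtheory FinFun.
Import ListNotations.
Open Scope R_scope.

(* Write rho(t) = cos(m2 t) e^{i (m1 t - alpha pi)} and, for an integer L,
   node L = L pi / (2 m1 m2), so that t_l = node l.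
   - The zeros of cos(m2 .) are the nodes node (m1 (2j+1)); rho sends exactly
     them to the origin, and 2 m2 of them lie in [0, 2pi): case (i).
   - At a regular t (cos(m2 t) <> 0), comparing moduli and arguments shows that
     rho s = rho t iff s and t are on the same branch (s = t + c pi with
     c (m1 + m2) even) or are crossing partners (t = node (m1 q + m2 k),
     s = node (m1 q - m2 k) with q + k even); coprimality enters here.
   - Being on the same branch is an equivalence; in [0, 2pi) a branch is {x}
     if m1 + m2 is odd and {x, x +- pi} if it is even.  The same analysis at the
     non-node pi / (4 m1 m2) shows that the periods are the branch shifts,
     whence the minimal period 2pi resp. pi.
   - The crossing partners of t form a single branch.  At the nodes of cases
     (ii)/(ii)' they exist off the branch of t, so S(t) is two branches; at all
     other regular t they collapse onto the branch of t, so S(t) is one branch.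
   The file develops these facts in this order and assembles them at the end. *)


Lemma cos_add_Z_2PI x j : cos (x + IZR j * (2 * PI)) = cos x.
Proof.
  destruct j as [|p|p]; simpl.
  - f_equal; ring.
  - rewrite <- positive_nat_Z, <- INR_IZR_INZ.
    replace (x + INR (Pos.to_nat p) * (2 * PI)) with (x + 2 * INR (Pos.to_nat p) * PI) by ring.
    apply cos_period.
  - rewrite <- Pos2Z.opp_pos, opp_IZR, <- positive_nat_Z, <- INR_IZR_INZ.
    set (n := Pos.to_nat p).
    rewrite <- (cos_period (x + - INR n * (2 * PI)) n). f_equal; ring.
Qed.

Lemma sin_Z_PI k : sin (IZR k * PI) = 0.
Proof. apply sin_eq_0_1; eauto. Qed.

(* cos (k pi) = +-1, in the squared form used for sign bookkeeping. *)
Lemma cos_Z_PI_sq k : cos (IZR k * PI) * cos (IZR k * PI) = 1.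
Proof.
  pose proof (sin2_cos2 (IZR k * PI)) as H.
  rewrite sin_Z_PI in H. unfold Rsqr in H. lra.
Qed.

Lemma cos_eq_cases x y : cos x = cos y ->
  exists j : Z, x = y + IZR j * (2 * PI) \/ x = - y + IZR j * (2 * PI).
Proof.
  intro H. assert (E : cos x - cos y = 0) by lra.
  rewrite form2 in E.
  assert (sin ((x - y) / 2) = 0 \/ sin ((x + y) / 2) = 0) as [E1|E1].
  { destruct (Req_dec (sin ((x - y) / 2)) 0); [left; auto | right].
    apply Rmult_integral in E. destruct E as [E|E]; [|auto].
    apply Rmult_integral in E. destruct E; [lra | contradiction]. }
  - destruct (sin_eq_0_0 _ E1) as [j Hj]. exists j. left. lra.
  - destruct (sin_eq_0_0 _ E1) as [j Hj]. exists j. right. lra.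
Qed.

Lemma IZR_PI_inj a b : IZR a * PI = IZR b * PI -> a = b.
Proof. intro H. apply eq_IZR. pose proof PI_RGT_0. nra. Qed.

Lemma pos_INR_of_ge1 m : (1 <= m)%nat -> 0 < INR m.
Proof. intro; apply lt_0_INR; lia. Qed.

Lemma pi_shift_bound x y n : 0 <= x < 2 * PI -> 0 <= y < 2 * PI -> y = x + IZR n * PI ->
  (-1 <= n <= 1)%Z.
Proof.
  intros Hx Hy E. pose proof PI_RGT_0.
  assert (Hn : -2 < IZR n < 2) by (split; apply (Rmult_lt_reg_r PI); auto; nra).
  destruct Hn as [Hn1 Hn2]. apply lt_IZR in Hn1. apply lt_IZR in Hn2. lia.
Qed.

Definition antipode (x : R) : R := if Rlt_dec x PI then x + PI else x - PI.

Lemma antipode_spec x : 0 <= x < 2 * PI ->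
  0 <= antipode x < 2 * PI /\ antipode x <> x /\
  exists e : Z, (e = 1 \/ e = -1)%Z /\ antipode x = x + IZR e * PI.
Proof.
  intro. pose proof PI_RGT_0. unfold antipode. destruct (Rlt_dec x PI).
  - split; [lra|]. split; [lra|]. exists 1%Z. split; auto. simpl. ring.
  - split; [lra|]. split; [lra|]. exists (-1)%Z. split; auto. simpl. ring.
Qed.

Lemma pi_shift_cases x y n : 0 <= x < 2 * PI -> 0 <= y < 2 * PI -> y = x + IZR n * PI ->
  y = x \/ y = antipode x.
Proof.
  intros Hx Hy E. pose proof PI_RGT_0. pose proof (pi_shift_bound _ _ _ Hx Hy E).
  assert (n = (-1)%Z \/ n = 0%Z \/ n = 1%Z) as [-> | [-> | ->]] by lia; simpl in E.
  - right. unfold antipode. destruct (Rlt_dec x PI); lra.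
  - left. lra.
  - right. unfold antipode. destruct (Rlt_dec x PI); lra.
Qed.

Lemma pi_shift_even x y n : 0 <= x < 2 * PI -> 0 <= y < 2 * PI -> y = x + IZR n * PI ->
  Z.Even n -> y = x.
Proof.
  intros Hx Hy E [w Hw]. pose proof (pi_shift_bound _ _ _ Hx Hy E).
  assert (w = 0%Z) by lia. subst. simpl in *. lra.
Qed.

Lemma Z_even_mul_odd a b : Z.Even (a * b) -> Z.Odd b -> Z.Even a.
Proof.
  intros Hab Hb. rewrite <- Z.even_spec in *. rewrite <- Z.odd_spec in Hb.
  rewrite Z.even_mul, <- (Z.negb_odd b), Hb in Hab. simpl in Hab.
  destruct (Z.even a); auto.
Qed.

Lemma Z_shift_into Y P : (0 < P)%Z -> exists n, (0 <= Y + P * n < P)%Z.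
Proof.
  intro HP. exists (- (Y / P))%Z. pose proof (Z.div_mod Y P ltac:(lia)).
  pose proof (Z.mod_pos_bound Y P HP). nia.
Qed.

Lemma card_eq_of_list (A : R -> Prop) (l : list R) :
  NoDup l -> (forall s, In s l <-> A s) -> card_eq A (length l).
Proof. intros; exists l; auto. Qed.

Section Rhodonea.
Variables (m1 m2 : nat) (alpha : R).
Hypotheses (hm1 : (1 <= m1)%nat) (hm2 : (1 <= m2)%nat).
Hypothesis hcop : Z.gcd (Z.of_nat m1) (Z.of_nat m2) = 1%Z.

Local Notation Z1 := (Z.of_nat m1).
Local Notation Z2 := (Z.of_nat m2).
Local Notation rho := (rhodonea m1 m2 alpha).

Definition node (L : Z) : R := IZR L * PI / (2 * INR m1 * INR m2).

Lemma node_scaled L : 2 * INR m1 * INR m2 * node L = IZR L * PI.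
Proof.
  pose proof (pos_INR_of_ge1 _ hm1). pose proof (pos_INR_of_ge1 _ hm2).
  unfold node. field. lra.
Qed.

Lemma node_of_scaled x L : 2 * INR m1 * INR m2 * x = IZR L * PI -> x = node L.
Proof.
  intro H. pose proof (pos_INR_of_ge1 _ hm1). pose proof (pos_INR_of_ge1 _ hm2).
  unfold node. rewrite <- H. field. lra.
Qed.

Lemma node_inj a b : node a = node b -> a = b.
Proof. intro H. apply IZR_PI_inj. now rewrite <- !node_scaled, H. Qed.

Lemma node_shift L n : node (L + 2 * Z1 * Z2 * n) = node L + IZR n * PI.
Proof.
  pose proof (pos_INR_of_ge1 _ hm1). pose proof (pos_INR_of_ge1 _ hm2).
  unfold node. rewrite plus_IZR, !mult_IZR, <- !INR_IZR_INZ. field. lra.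
Qed.

Lemma node_range L : 0 <= node L < 2 * PI <-> (0 <= L < 4 * Z1 * Z2)%Z.
Proof.
  pose proof PI_RGT_0. pose proof (pos_INR_of_ge1 _ hm1). pose proof (pos_INR_of_ge1 _ hm2).
  pose proof (node_scaled L) as E. set (x := node L) in *.
  assert (Hm : 0 < 2 * INR m1 * INR m2) by nra.
  split.
  - intros [A B]. split.
    + apply le_IZR. apply (Rmult_le_reg_r PI); auto. rewrite <- E. nra.
    + apply lt_IZR. apply (Rmult_lt_reg_r PI); auto. rewrite <- E.
      rewrite !mult_IZR, <- !INR_IZR_INZ. nra.
  - intros [A B]. apply IZR_le in A. apply IZR_lt in B.
    rewrite !mult_IZR, <- !INR_IZR_INZ in B. split.
    + apply (Rmult_le_reg_l (2 * INR m1 * INR m2)); auto. rewrite E. nra.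
    + apply (Rmult_lt_reg_l (2 * INR m1 * INR m2)); auto. rewrite E. nra.
Qed.

Lemma t_node_node l : t_node m1 m2 l = node (Z.of_nat l).
Proof. unfold t_node, node. now rewrite <- INR_IZR_INZ. Qed.

Lemma cos_m2_zero_iff x :
  cos (INR m2 * x) = 0 <-> exists j, x = node (Z1 * (2 * j + 1)).
Proof.
  pose proof PI_RGT_0. pose proof (pos_INR_of_ge1 _ hm1). split.
  - intro Hz. destruct (cos_eq_0_0 _ Hz) as [j Hj]. exists j. apply node_of_scaled.
    rewrite mult_IZR, plus_IZR, mult_IZR, <- INR_IZR_INZ.
    apply (f_equal (fun z => 2 * INR m1 * z)) in Hj. nra.
  - intros [j Hj]. apply cos_eq_0_1. exists j.
    pose proof (node_scaled (Z1 * (2 * j + 1))) as E. rewrite <- Hj in E.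
    rewrite mult_IZR, plus_IZR, mult_IZR, <- INR_IZR_INZ in E.
    apply (Rmult_eq_reg_l (2 * INR m1)); [|lra]. nra.
Qed.

Lemma rho_eq_of_pi_shift s t k :
  INR m1 * (t - s) = IZR k * PI ->
  cos (INR m2 * s) = cos (INR m2 * t + IZR k * PI) ->
  rho s = rho t.
Proof.
  intros H1 H2. unfold rhodonea.
  set (a := INR m1 * t - alpha * PI).
  assert (Es : INR m1 * s - alpha * PI = a - IZR k * PI) by (unfold a; lra).
  rewrite Es, H2, cos_minus, sin_minus, cos_plus, !sin_Z_PI.
  pose proof (cos_Z_PI_sq k) as Hc. set (c := cos (IZR k * PI)) in *.
  f_equal.
  - transitivity (c * c * cos (INR m2 * t) * cos a); [ring | rewrite Hc; ring].
  - transitivity (c * c * cos (INR m2 * t) * sin a); [ring | rewrite Hc; ring].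
Qed.

Definition same_branch (s t : R) : Prop :=
  exists c : Z, s = t + IZR c * PI /\ Z.Even (c * (Z1 + Z2)).

Definition cross_branch (s t : R) : Prop :=
  exists q k : Z, Z.Even (q + k) /\ t = node (Z1 * q + Z2 * k) /\ s = node (Z1 * q - Z2 * k).

Lemma rho_same_branch s t : same_branch s t -> rho s = rho t.
Proof.
  intros [c [Hs [w Hw]]].
  apply (rho_eq_of_pi_shift _ _ (- Z1 * c)%Z).
  - rewrite mult_IZR, opp_IZR, <- INR_IZR_INZ, Hs. ring.
  - rewrite <- (cos_add_Z_2PI (INR m2 * t + IZR (- Z1 * c) * PI) w). f_equal.
    apply (f_equal (fun z => IZR z * PI)) in Hw.
    rewrite Hs, !mult_IZR, plus_IZR, opp_IZR, <- !INR_IZR_INZ in *. lra.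
Qed.

Lemma rho_cross_branch s t : cross_branch s t -> rho s = rho t.
Proof.
  intros [q [k [[w Hw] [Ht Hs]]]].
  pose proof (pos_INR_of_ge1 _ hm1). pose proof (pos_INR_of_ge1 _ hm2).
  pose proof (node_scaled (Z1 * q + Z2 * k)) as E1.
  pose proof (node_scaled (Z1 * q - Z2 * k)) as E2.
  rewrite <- Ht in E1. rewrite <- Hs in E2.
  rewrite plus_IZR, minus_IZR, !mult_IZR, <- !INR_IZR_INZ in *.
  apply (rho_eq_of_pi_shift _ _ k).
  - apply (Rmult_eq_reg_l (2 * INR m2)); [|nra]. nra.
  - replace (INR m2 * s) with (- (INR m2 * t + IZR k * PI) + IZR w * (2 * PI)).
    + now rewrite cos_add_Z_2PI, cos_neg.
    + apply (f_equal IZR) in Hw. rewrite plus_IZR, mult_IZR in Hw.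
      apply (Rmult_eq_reg_l (2 * INR m1)); [|nra]. nra.
Qed.

(* Converse of [rho_eq_of_pi_shift] away from the origin: equal moduli and
   arguments of rho force m1 (t - s) = k pi and cos (m2 s) = (-1)^k cos (m2 t). *)
Lemma pi_shift_of_rho_eq s t :
  rho s = rho t -> cos (INR m2 * t) <> 0 ->
  exists k : Z, INR m1 * (t - s) = IZR k * PI /\
                cos (INR m2 * s) = cos (INR m2 * t + IZR k * PI).
Proof.
  intros H Hb. unfold rhodonea in H. injection H as Ha1 Ha2.
  set (a := cos (INR m2 * s)) in *. set (b := cos (INR m2 * t)) in *.
  set (ts := INR m1 * s - alpha * PI) in *. set (tt := INR m1 * t - alpha * PI) in *.
  pose proof (sin2_cos2 ts) as Ps. pose proof (sin2_cos2 tt) as Pt. unfold Rsqr in *.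
  assert (Hmod : a * a = b * b).
  { transitivity ((a * cos ts) * (a * cos ts) + (a * sin ts) * (a * sin ts)).
    - transitivity (a * a * (sin ts * sin ts + cos ts * cos ts)); [rewrite Ps|]; ring.
    - rewrite Ha1, Ha2.
      transitivity (b * b * (sin tt * sin tt + cos tt * cos tt)); [ring | rewrite Pt; ring]. }
  assert (Ha : a <> 0) by (intro E; apply Hb; rewrite E in Hmod; nra).
  assert (Harg : sin (tt - ts) = 0).
  { rewrite sin_minus.
    apply (Rmult_eq_reg_l (a * b)); [|intro E; apply Rmult_integral in E; tauto].
    transitivity ((b * sin tt) * (a * cos ts) - (b * cos tt) * (a * sin ts)); [ring|].
    rewrite <- Ha1, <- Ha2. ring. }
  destruct (sin_eq_0_0 _ Harg) as [k Hk]. exists k.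
  split; [unfold tt, ts in Hk; lra|].
  pose proof (cos_Z_PI_sq k) as Hc.
  assert (Ec : cos ts = cos tt * cos (IZR k * PI)).
  { replace ts with (tt - IZR k * PI) by lra. rewrite cos_minus, sin_Z_PI. ring. }
  assert (Es : sin ts = sin tt * cos (IZR k * PI)).
  { replace ts with (tt - IZR k * PI) by lra. rewrite sin_minus, sin_Z_PI. ring. }
  set (c := cos (IZR k * PI)) in *.
  assert (Hac : a * c = b).
  { transitivity ((a * cos ts) * cos tt + (a * sin ts) * sin tt).
    - rewrite Ec, Es.
      transitivity (a * c * (sin tt * sin tt + cos tt * cos tt)); [rewrite Pt|]; ring.
    - rewrite Ha1, Ha2.
      transitivity (b * (sin tt * sin tt + cos tt * cos tt)); [ring | rewrite Pt; ring]. }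
  rewrite cos_plus, sin_Z_PI. fold b c. rewrite <- Hac.
  transitivity (a * (c * c)); [rewrite Hc|]; ring.
Qed.

(* Solving the two conditions of [rho_eq_of_pi_shift] over the integers: the
   sign +1 gives a same-branch pair, the sign -1 a crossing pair. *)
Lemma branches_of_pi_shift s t k :
  INR m1 * (t - s) = IZR k * PI ->
  cos (INR m2 * s) = cos (INR m2 * t + IZR k * PI) ->
  same_branch s t \/ cross_branch s t.
Proof.
  intros Hk Hcs. pose proof PI_RGT_0.
  pose proof (pos_INR_of_ge1 _ hm1). pose proof (pos_INR_of_ge1 _ hm2).
  destruct (cos_eq_cases _ _ Hcs) as [j [Hj|Hj]].
  - left.
    assert (Hlin : (Z2 * k + Z1 * (k + 2 * j) = 0)%Z).
    { apply IZR_PI_inj. rewrite plus_IZR, !mult_IZR, plus_IZR, mult_IZR, <- !INR_IZR_INZ.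
      apply (f_equal (fun z => INR m2 * z)) in Hk. nra. }
    assert (Dv : (Z1 | k)%Z).
    { apply Z.gauss with Z2; auto. exists (- (k + 2 * j))%Z. lia. }
    destruct Dv as [z Hz]. subst k. exists (- z)%Z. split.
    + rewrite mult_IZR, <- INR_IZR_INZ in Hk.
      apply (Rmult_eq_reg_l (INR m1)); [|lra]. rewrite opp_IZR. nra.
    + exists j.
      assert (EE : (Z1 * (z * (Z1 + Z2) + 2 * j) = 0)%Z) by lia.
      apply Z.eq_mul_0 in EE. lia.
  - right. exists (2 * j - k)%Z, k. split; [exists j; lia|]. split.
    + apply node_of_scaled. rewrite plus_IZR, !mult_IZR, minus_IZR, mult_IZR, <- !INR_IZR_INZ.
      nra.
    + apply node_of_scaled. rewrite minus_IZR, !mult_IZR, minus_IZR, mult_IZR, <- !INR_IZR_INZ.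
      nra.
Qed.

Lemma rho_eq_iff_branches s t : cos (INR m2 * t) <> 0 ->
  rho s = rho t <-> same_branch s t \/ cross_branch s t.
Proof.
  intro Hb. split.
  - intro H. destruct (pi_shift_of_rho_eq s t H Hb) as [k [Hk Hcs]].
    exact (branches_of_pi_shift s t k Hk Hcs).
  - intros [H|H]; [apply rho_same_branch | apply rho_cross_branch]; exact H.
Qed.

Lemma rho_eq_iff_origin s t : cos (INR m2 * t) = 0 ->
  rho s = rho t <-> cos (INR m2 * s) = 0.
Proof.
  intro H. unfold rhodonea. rewrite H, !Rmult_0_l. split.
  - intro E. injection E as E1 E2.
    pose proof (sin2_cos2 (INR m1 * s - alpha * PI)) as P. unfold Rsqr in P.
    apply Rmult_integral in E1. apply Rmult_integral in E2.
    destruct E1 as [E1|E1]; auto. destruct E2 as [E2|E2]; auto. rewrite E1, E2 in P. lra.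
  - intro E. now rewrite E, !Rmult_0_l.
Qed.

Lemma same_branch_refl t : same_branch t t.
Proof. exists 0%Z. split; [simpl; ring | exists 0%Z; ring]. Qed.

Lemma same_branch_sym s t : same_branch s t -> same_branch t s.
Proof.
  intros [c [E [w Hw]]]. exists (- c)%Z. split.
  - rewrite opp_IZR, E. ring.
  - exists (- w)%Z. lia.
Qed.

Lemma same_branch_trans r s t : same_branch r s -> same_branch s t -> same_branch r t.
Proof.
  intros [c [E [w Hw]]] [d [F [v Hv]]]. exists (c + d)%Z. split.
  - rewrite plus_IZR, E, F. ring.
  - exists (w + v)%Z. lia.
Qed.

Lemma same_branch_in_range_odd s t : Z.Odd (Z1 + Z2) ->
  0 <= s < 2 * PI -> 0 <= t < 2 * PI -> same_branch s t -> s = t.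
Proof.
  intros Ho Hs Ht [c [E Hc]]. apply (pi_shift_even t s c); auto.
  exact (Z_even_mul_odd _ _ Hc Ho).
Qed.

Lemma same_branch_antipode t : Z.Even (Z1 + Z2) -> 0 <= t < 2 * PI ->
  same_branch (antipode t) t.
Proof.
  intros [w Hw] Ht. destruct (antipode_spec t Ht) as [_ [_ [e [He E]]]].
  exists e. split; auto. exists (e * w)%Z. rewrite Hw. ring.
Qed.

Definition branch_points (x : R) : list R :=
  if Z.even (Z1 + Z2) then [x; antipode x] else [x].

Lemma branch_points_spec x s : 0 <= x < 2 * PI ->
  In s (branch_points x) <-> 0 <= s < 2 * PI /\ same_branch s x.
Proof.
  intro Hx. unfold branch_points. destruct (Z.even (Z1 + Z2)) eqn:Hpar; simpl.
  - apply Z.even_spec in Hpar. destruct (antipode_spec x Hx) as [Ha _]. split.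
    + intros [<-|[<-|[]]].
      * split; [exact Hx | apply same_branch_refl].
      * split; [exact Ha | now apply same_branch_antipode].
    + intros [Hs [c [E _]]]. destruct (pi_shift_cases x s c Hx Hs E); auto.
  - assert (Ho : Z.Odd (Z1 + Z2)) by (apply Z.odd_spec; now rewrite <- Z.negb_even, Hpar).
    split.
    + intros [<-|[]]. split; [exact Hx | apply same_branch_refl].
    + intros [Hs H]. left. symmetry. now apply same_branch_in_range_odd.
Qed.

Lemma branch_points_NoDup x : 0 <= x < 2 * PI -> NoDup (branch_points x).
Proof.
  intro Hx. destruct (antipode_spec x Hx) as [_ [Hne _]].
  unfold branch_points. destruct (Z.even (Z1 + Z2)); repeat constructor; simpl; intuition.
Qed.

Lemma branch_points_length x :
  length (branch_points x) = (if Z.even (Z1 + Z2) then 2 else 1)%nat.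
Proof. unfold branch_points. now destruct (Z.even (Z1 + Z2)). Qed.

Lemma cross_branch_unique s1 s2 t :
  cross_branch s1 t -> cross_branch s2 t -> same_branch s1 s2.
Proof.
  intros [q1 [k1 [[a Ha] [Ht1 Hs1]]]] [q2 [k2 [[b Hb] [Ht2 Hs2]]]].
  rewrite Ht1 in Ht2. apply node_inj in Ht2.
  assert (Dv : (Z2 | q1 - q2)%Z).
  { apply Z.gauss with Z1; [exists (k2 - k1)%Z; lia | now rewrite Z.gcd_comm]. }
  destruct Dv as [n Hn].
  assert (Hk : (k2 - k1 = n * Z1)%Z).
  { apply (Z.mul_reg_l _ _ Z2); [lia | nia]. }
  exists n. split.
  - rewrite Hs1, Hs2, <- node_shift. f_equal. nia.
  - exists (a - b + k2 - k1)%Z. nia.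
Qed.

Lemma cross_branch_transfer s s' t :
  cross_branch s t -> same_branch s' s -> cross_branch s' t.
Proof.
  intros [q [k [[a Ha] [Ht Hs]]]] [n [E [b Hb]]].
  exists (q + Z2 * n)%Z, (k - Z1 * n)%Z. split; [|split].
  - exists (a + b - Z1 * n)%Z. lia.
  - rewrite Ht. f_equal. ring.
  - rewrite E, Hs, <- node_shift. f_equal. ring.
Qed.

Lemma cross_branch_exists q k : Z.Even (q + k) ->
  exists s, 0 <= s < 2 * PI /\ cross_branch s (node (Z1 * q + Z2 * k)).
Proof.
  intros [a Ha].
  destruct (Z_shift_into (Z1 * q - Z2 * k) (4 * Z1 * Z2) ltac:(lia)) as [n Hn].
  exists (node (Z1 * q - Z2 * k + 4 * Z1 * Z2 * n)). split.
  - apply node_range. nia.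
  - exists (q + 2 * Z2 * n)%Z, (k - 2 * Z1 * n)%Z. split; [|split].
    + exists (a + Z2 * n - Z1 * n)%Z. lia.
    + f_equal. ring.
    + f_equal. ring.
Qed.

Lemma cross_branch_same_divisible s L :
  cross_branch s (node L) -> same_branch s (node L) -> (Z1 | L)%Z.
Proof.
  intros [q [k [_ [Ht Hs]]]] [c [E _]]. apply node_inj in Ht.
  rewrite Hs, <- node_shift in E. apply node_inj in E.
  assert (Hk : (k = - Z1 * c)%Z) by (apply (Z.mul_reg_l _ _ (2 * Z2)); [lia | nia]).
  exists (q - Z2 * c)%Z. subst. ring.
Qed.

Lemma cross_branch_degenerate s w :
  cross_branch s (node (Z1 * (2 * w))) -> same_branch s (node (Z1 * (2 * w))).
Proof.
  intros [q [k [[a Ha] [Ht Hs]]]]. apply node_inj in Ht.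
  assert (Dk : (Z1 | k)%Z).
  { apply Z.gauss with Z2; auto. exists (2 * w - q)%Z. lia. }
  destruct Dk as [z Hz]. subst k. exists (- z)%Z. split.
  - rewrite Hs, Ht, <- node_shift. f_equal. ring.
  - assert (Hq : (2 * w = q + Z2 * z)%Z) by (apply (Z.mul_reg_l _ _ Z1); [lia | nia]).
    exists (w - a - z * Z2)%Z. nia.
Qed.

Lemma index_bezout L : exists q k, (Z1 * q + Z2 * k = L)%Z.
Proof.
  destruct (Z.gcd_bezout _ _ _ hcop) as [u [v Huv]].
  exists (u * L)%Z, (v * L)%Z.
  transitivity ((u * Z1 + v * Z2) * L)%Z; [ring | rewrite Huv; ring].
Qed.

Lemma admissible_repr_odd L : Z.Odd (Z1 + Z2) ->
  exists q k, Z.Even (q + k) /\ L = (Z1 * q + Z2 * k)%Z.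
Proof.
  intros [d Hd]. destruct (index_bezout L) as [q [k Hqk]].
  destruct (Z.Even_or_Odd (q + k)) as [He | [e He]].
  - now exists q, k.
  - exists (q + Z2)%Z, (k - Z1)%Z. split; [exists (e + d - Z1 + 1)%Z; lia | lia].
Qed.

Lemma both_odd : Z.Even (Z1 + Z2) -> Z.Odd Z1 /\ Z.Odd Z2.
Proof.
  intros [b Hb]. destruct (Z.Even_or_Odd Z1) as [[a Ha] | [a Ha]].
  - exfalso.
    assert (D : (2 | Z.gcd Z1 Z2)%Z).
    { apply Z.gcd_greatest; [exists a | exists (b - a)%Z]; lia. }
    rewrite hcop in D. destruct D as [c Hc]. lia.
  - split; [now exists a | exists (b - a - 1)%Z; lia].
Qed.

Lemma admissible_index_even q k : Z.Even (Z1 + Z2) -> Z.Even (q + k) ->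
  Z.Even (Z1 * q + Z2 * k).
Proof.
  intros Hev [a Ha]. destruct (both_odd Hev) as [[a1 Ha1] [b1 Hb1]].
  exists (a + a1 * q + b1 * k)%Z. rewrite Ha1, Hb1. lia.
Qed.

Lemma admissible_repr_even l : Z.Even (Z1 + Z2) ->
  exists q k, Z.Even (q + k) /\ (2 * l = Z1 * q + Z2 * k)%Z.
Proof.
  intro Hev. destruct (both_odd Hev) as [[a1 Ha1] [b1 Hb1]].
  destruct (index_bezout (2 * l)) as [q [k Hqk]]. exists q, k. split; [|lia].
  exists (l - a1 * q - b1 * k)%Z. rewrite Ha1, Hb1 in Hqk. lia.
Qed.

Lemma S_set_regular t s : cos (INR m2 * t) <> 0 ->
  S_set rho t s <-> 0 <= s < 2 * PI /\ (same_branch s t \/ cross_branch s t).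
Proof.
  intro Hc. unfold S_set. now rewrite (rho_eq_iff_branches s t Hc).
Qed.

Lemma fibre_card_unbranched t : 0 <= t < 2 * PI -> cos (INR m2 * t) <> 0 ->
  (forall s, cross_branch s t -> same_branch s t) ->
  card_eq (S_set rho t) (length (branch_points t)).
Proof.
  intros Ht Hc Hdeg. apply card_eq_of_list; [now apply branch_points_NoDup|].
  intro s. rewrite (S_set_regular t s Hc), (branch_points_spec t s Ht).
  split; [tauto|]. intros [Hs [H|H]]; auto.
Qed.

Lemma fibre_card_crossing t sx : 0 <= t < 2 * PI -> 0 <= sx < 2 * PI ->
  cos (INR m2 * t) <> 0 -> cross_branch sx t -> ~ same_branch sx t ->
  card_eq (S_set rho t) (2 * length (branch_points t)).
Proof.
  intros Ht Hsx Hc Hcross Hoff.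
  replace (2 * length (branch_points t))%nat
    with (length (branch_points t ++ branch_points sx))
    by (rewrite length_app, !branch_points_length; lia).
  apply card_eq_of_list.
  - apply NoDup_app; try now apply branch_points_NoDup.
    intros a Ha Ha'. apply branch_points_spec in Ha as [_ Ha]; auto.
    apply branch_points_spec in Ha' as [_ Ha']; auto.
    apply Hoff. eapply same_branch_trans; [apply same_branch_sym|]; eauto.
  - intro s. rewrite in_app_iff, (S_set_regular t s Hc),
      (branch_points_spec t s Ht), (branch_points_spec sx s Hsx).
    split.
    + intros [[Hs H] | [Hs H]]; split; auto. right. eapply cross_branch_transfer; eauto.
    + intros [Hs [H|H]]; [left | right]; split; auto. eapply cross_branch_unique; eauto.
Qed.

Lemma fibre_card_origin t : cos (INR m2 * t) = 0 -> card_eq (S_set rho t) (2 * m2).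
Proof.
  intro Hz.
  set (zero := fun j : nat => node (Z1 * (2 * Z.of_nat j + 1))).
  replace (2 * m2)%nat with (length (map zero (seq 0 (2 * m2))))
    by now rewrite length_map, length_seq.
  apply card_eq_of_list.
  - apply Injective_map_NoDup; [|apply seq_NoDup].
    intros a b E. apply node_inj in E. nia.
  - intro s. unfold S_set. rewrite (rho_eq_iff_origin s t Hz), in_map_iff, cos_m2_zero_iff.
    split.
    + intros [a [<- Ha]]. apply in_seq in Ha. split; [apply node_range; nia | now eexists].
    + intros [Hs [b ->]]. apply node_range in Hs.
      exists (Z.to_nat b). split.
      * unfold zero. now rewrite Z2Nat.id by nia.
      * apply in_seq. nia.
Qed.

Lemma fibre_card_node L q k : (0 <= L < 4 * Z1 * Z2)%Z -> ~ (Z1 | L)%Z ->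
  Z.Even (q + k) -> L = (Z1 * q + Z2 * k)%Z ->
  card_eq (S_set rho (node L)) (2 * length (branch_points (node L))).
Proof.
  intros HL Hnd Hqk EL.
  assert (Hc : cos (INR m2 * node L) <> 0).
  { intro Hz. apply cos_m2_zero_iff in Hz as [j Hj]. apply node_inj in Hj.
    apply Hnd. exists (2 * j + 1)%Z. lia. }
  destruct (cross_branch_exists q k Hqk) as [sx [Hsx Hcross]]. rewrite <- EL in Hcross.
  apply (fibre_card_crossing _ sx); auto.
  - now apply node_range.
  - intro Hsame. apply Hnd. exact (cross_branch_same_divisible sx L Hcross Hsame).
Qed.

Lemma unbranched_of_nodes t :
  (forall q k, Z.Even (q + k) -> t = node (Z1 * q + Z2 * k) ->
     exists w, (Z1 * q + Z2 * k = Z1 * (2 * w))%Z) ->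
  forall s, cross_branch s t -> same_branch s t.
Proof.
  intros Hnodes s Hcross. pose proof Hcross as [q [k [Hqk [Ht _]]]].
  destruct (Hnodes q k Hqk Ht) as [w Hw]. rewrite Hw in Ht. subst t.
  now apply cross_branch_degenerate.
Qed.

Lemma regular_off_origin t : 0 <= t < 2 * PI ->
  ~ (exists l : nat, (l < 4 * m1 * m2)%nat /\ (l mod (2 * m1) = m1)%nat /\ t = t_node m1 m2 l) ->
  cos (INR m2 * t) <> 0.
Proof.
  intros Ht Hn Hz. apply Hn. apply cos_m2_zero_iff in Hz as [j Hj].
  assert (HL := Ht). rewrite Hj in HL. apply node_range in HL.
  exists (Z.to_nat (Z1 * (2 * j + 1))). split; [lia|]. split.
  - apply Nat2Z.inj. rewrite Nat2Z.inj_mod, Z2Nat.id by lia.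
    symmetry. apply Z.mod_unique with j; lia.
  - now rewrite t_node_node, Z2Nat.id by lia.
Qed.

Lemma nat_mod_m1_zero_iff l : (l mod m1 = 0)%nat <-> (Z1 | Z.of_nat l)%Z.
Proof. rewrite <- Z.mod_divide, <- Nat2Z.inj_mod by lia. lia. Qed.

Lemma Z_even_false_of_odd n : Z.Odd n -> Z.even n = false.
Proof. intro H. apply Z.odd_spec in H. now rewrite <- Z.negb_odd, H. Qed.

Lemma case_origin l : (l mod (2 * m1) = m1)%nat ->
  card_eq (S_set rho (t_node m1 m2 l)) (2 * m2).
Proof.
  intro Hl. apply fibre_card_origin, cos_m2_zero_iff.
  exists (Z.of_nat (l / (2 * m1))). rewrite t_node_node. f_equal.
  pose proof (Nat.div_mod_eq l (2 * m1)). lia.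
Qed.

Lemma case_node_odd l : Z.Odd (Z1 + Z2) -> (l < 4 * m1 * m2)%nat -> (l mod m1 <> 0)%nat ->
  card_eq (S_set rho (t_node m1 m2 l)) 2.
Proof.
  intros Ho Hl Hm. rewrite t_node_node.
  destruct (admissible_repr_odd (Z.of_nat l) Ho) as [q [k [Hqk EL]]].
  assert (Hcard := fibre_card_node (Z.of_nat l) q k ltac:(lia)
                     (fun H => Hm (proj2 (nat_mod_m1_zero_iff l) H)) Hqk EL).
  now rewrite branch_points_length, Z_even_false_of_odd in Hcard.
Qed.

Lemma case_node_even l : Z.Even (Z1 + Z2) -> (l < 2 * m1 * m2)%nat -> (l mod m1 <> 0)%nat ->
  card_eq (S_set rho (t_node m1 m2 (2 * l))) 4.
Proof.
  intros Hev Hl Hm. rewrite t_node_node.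
  destruct (both_odd Hev) as [[a Ha] _].
  destruct (admissible_repr_even (Z.of_nat l) Hev) as [q [k [Hqk EL]]].
  assert (Hnd : ~ (Z1 | Z.of_nat (2 * l))%Z).
  { intro Hd. apply Hm, nat_mod_m1_zero_iff. apply Z.gauss with 2%Z.
    - rewrite Nat2Z.inj_mul in Hd. exact Hd.
    - apply Z.bezout_1_gcd. exists 1%Z, (- a)%Z. lia. }
  assert (Hcard := fibre_card_node (Z.of_nat (2 * l)) q k ltac:(lia) Hnd Hqk ltac:(lia)).
  apply Z.even_spec in Hev.
  now rewrite branch_points_length, Hev in Hcard.
Qed.

Lemma case_generic_odd t : Z.Odd (Z1 + Z2) -> 0 <= t < 2 * PI ->
  ~ (exists l : nat, (l < 4 * m1 * m2)%nat /\ (l mod (2 * m1) = m1)%nat /\ t = t_node m1 m2 l) ->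
  ~ (exists l : nat, (l < 4 * m1 * m2)%nat /\ (l mod m1 <> 0)%nat /\ t = t_node m1 m2 l) ->
  card_eq (S_set rho t) 1.
Proof.
  intros Ho Ht Hn1 Hn2.
  assert (Hcard := fibre_card_unbranched t Ht (regular_off_origin t Ht Hn1)).
  rewrite branch_points_length, Z_even_false_of_odd in Hcard by exact Ho.
  apply Hcard, unbranched_of_nodes. intros q k _ HtL.
  set (L := (Z1 * q + Z2 * k)%Z) in *.
  assert (HL := Ht). rewrite HtL in HL. apply node_range in HL.
  assert (Htl : t = t_node m1 m2 (Z.to_nat L)) by now rewrite t_node_node, Z2Nat.id by lia.
  assert (Hdiv : (Z1 | L)%Z).
  { rewrite <- (Z2Nat.id L) by lia. apply nat_mod_m1_zero_iff.
    destruct (Nat.eq_dec (Z.to_nat L mod m1) 0) as [E|E]; auto.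
    exfalso. apply Hn2. exists (Z.to_nat L). split; [lia | auto]. }
  destruct Hdiv as [v Hv]. destruct (Z.Even_or_Odd v) as [[w Hw] | [j Hj]].
  - exists w. lia.
  - exfalso. apply Hn1. exists (Z.to_nat L). split; [lia | split; auto].
    apply Nat2Z.inj. rewrite Nat2Z.inj_mod, Z2Nat.id by lia.
    symmetry. apply Z.mod_unique with j; lia.
Qed.

Lemma case_generic_even t : Z.Even (Z1 + Z2) -> 0 <= t < 2 * PI ->
  ~ (exists l : nat, (l < 4 * m1 * m2)%nat /\ (l mod (2 * m1) = m1)%nat /\ t = t_node m1 m2 l) ->
  ~ (exists l : nat, (l < 2 * m1 * m2)%nat /\ (l mod m1 <> 0)%nat /\ t = t_node m1 m2 (2 * l)) ->
  card_eq (S_set rho t) 2.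
Proof.
  intros Hev Ht Hn1 Hn2.
  assert (Hcard := fibre_card_unbranched t Ht (regular_off_origin t Ht Hn1)).
  assert (Hpar := Hev). apply Z.even_spec in Hpar.
  rewrite branch_points_length, Hpar in Hcard.
  apply Hcard, unbranched_of_nodes. intros q k Hqk HtL.
  destruct (admissible_index_even q k Hev Hqk) as [h Hh].
  set (L := (Z1 * q + Z2 * k)%Z) in *.
  assert (HL := Ht). rewrite HtL in HL. apply node_range in HL.
  assert (Htl : t = t_node m1 m2 (2 * Z.to_nat h))
    by (rewrite t_node_node, HtL; f_equal; lia).
  assert (Hdiv : (Z1 | h)%Z).
  { rewrite <- (Z2Nat.id h) by lia. apply nat_mod_m1_zero_iff.
    destruct (Nat.eq_dec (Z.to_nat h mod m1) 0) as [E|E]; auto.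
    exfalso. apply Hn2. exists (Z.to_nat h). split; [lia | auto]. }
  destruct Hdiv as [w Hw]. exists w. lia.
Qed.

Lemma quarter_not_node L : PI / (4 * INR m1 * INR m2) <> node L.
Proof.
  intro E. pose proof (node_scaled L) as T. rewrite <- E in T.
  pose proof (pos_INR_of_ge1 _ hm1). pose proof (pos_INR_of_ge1 _ hm2). pose proof PI_RGT_0.
  assert (H2L : IZR (2 * L) = IZR 1).
  { rewrite mult_IZR. apply (Rmult_eq_reg_r PI); [|lra].
    rewrite Rmult_assoc, <- T. field. lra. }
  apply eq_IZR in H2L. lia.
Qed.

(* Shifts along a branch are periods ... *)
Lemma is_period_of_branch c : Z.Even (c * (Z1 + Z2)) -> is_period rho (IZR c * PI).
Proof. intros He t. apply rho_same_branch. now exists c. Qed.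

(* ... and every positive period is such a shift, as seen at the regular,
   non-node parameter pi / (4 m1 m2). *)
Lemma period_is_branch_shift p : 0 < p -> is_period rho p ->
  exists c : Z, (1 <= c)%Z /\ p = IZR c * PI /\ Z.Even (c * (Z1 + Z2)).
Proof.
  intros Hp Hper. set (t0 := PI / (4 * INR m1 * INR m2)).
  assert (Hc : cos (INR m2 * t0) <> 0).
  { intro Hz. apply cos_m2_zero_iff in Hz as [j Hj]. exact (quarter_not_node _ Hj). }
  destruct (proj1 (rho_eq_iff_branches (t0 + p) t0 Hc) (Hper t0))
    as [[c [E Hc2]] | [q [k [_ [Ht _]]]]].
  - exists c. pose proof PI_RGT_0.
    assert (Hc0 : 0 < IZR c) by (apply (Rmult_lt_reg_r PI); lra).
    apply lt_IZR in Hc0. split; [lia | split; [lra | exact Hc2]].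
  - exfalso. exact (quarter_not_node _ Ht).
Qed.

Lemma minimal_period_odd : Z.Odd (Z1 + Z2) -> minimal_period rho (2 * PI).
Proof.
  intro Ho. pose proof PI_RGT_0. split; [lra | split].
  - replace (2 * PI) with (IZR 2 * PI) by (simpl; ring).
    apply is_period_of_branch. exists (Z1 + Z2)%Z. ring.
  - intros p Hp Hper. destruct (period_is_branch_shift p Hp Hper) as [c [Hc [-> Ev]]].
    destruct (Z_even_mul_odd _ _ Ev Ho) as [u Hu].
    assert (Hc2 : (2 <= c)%Z) by lia. apply IZR_le in Hc2. simpl in Hc2. nra.
Qed.

Lemma minimal_period_even : Z.Even (Z1 + Z2) -> minimal_period rho PI.
Proof.
  intro Hev. pose proof PI_RGT_0. split; [lra | split].
  - intro t. replace (t + PI) with (t + IZR 1 * PI) by (simpl; ring).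
    apply is_period_of_branch. now rewrite Z.mul_1_l.
  - intros p Hp Hper. destruct (period_is_branch_shift p Hp Hper) as [c [Hc [-> _]]].
    apply IZR_le in Hc. simpl in Hc. nra.
Qed.

End Rhodonea.

Lemma Z_gcd_of_nat_coprime m1 m2 : (1 <= m1)%nat -> Nat.gcd m1 m2 = 1%nat ->
  Z.gcd (Z.of_nat m1) (Z.of_nat m2) = 1%Z.
Proof.
  intros hm1 hcop. destruct (Nat.gcd_bezout_pos m1 m2 ltac:(lia)) as [a [b e]].
  rewrite hcop in e. apply Z.bezout_1_gcd. exists (Z.of_nat a), (- Z.of_nat b)%Z. lia.
Qed.
Theorem proposition2p1 (m1 m2 : nat) (alpha : R)
  (hm1 : (1 <= m1)%nat) (hm2 : (1 <= m2)%nat) (hcop : Nat.gcd m1 m2 = 1%nat) :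
  let rho := rhodonea m1 m2 alpha in
  (Nat.Odd (m1 + m2) ->
     minimal_period rho (2 * PI) /\
     (forall t, 0 <= t < 2 * PI ->
        ((exists l : nat, (l < 4 * m1 * m2)%nat /\ (l mod (2 * m1) = m1)%nat
                          /\ t = t_node m1 m2 l) ->
           card_eq (S_set rho t) (2 * m2)) /\
        ((exists l : nat, (l < 4 * m1 * m2)%nat /\ (l mod m1 <> 0)%nat
                          /\ t = t_node m1 m2 l) ->
           card_eq (S_set rho t) 2) /\
        (~ (exists l : nat, (l < 4 * m1 * m2)%nat /\ (l mod (2 * m1) = m1)%nat
                            /\ t = t_node m1 m2 l) ->
         ~ (exists l : nat, (l < 4 * m1 * m2)%nat /\ (l mod m1 <> 0)%nat
                            /\ t = t_node m1 m2 l) ->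
           card_eq (S_set rho t) 1))) /\
  (Nat.Even (m1 + m2) ->
     minimal_period rho PI /\
     (forall t, 0 <= t < 2 * PI ->
        ((exists l : nat, (l < 4 * m1 * m2)%nat /\ (l mod (2 * m1) = m1)%nat
                          /\ t = t_node m1 m2 l) ->
           card_eq (S_set rho t) (2 * m2)) /\
        ((exists l : nat, (l < 2 * m1 * m2)%nat /\ (l mod m1 <> 0)%nat
                          /\ t = t_node m1 m2 (2 * l)) ->
           card_eq (S_set rho t) 4) /\
        (~ (exists l : nat, (l < 4 * m1 * m2)%nat /\ (l mod (2 * m1) = m1)%nat
                            /\ t = t_node m1 m2 l) ->
         ~ (exists l : nat, (l < 2 * m1 * m2)%nat /\ (l mod m1 <> 0)%nat
                            /\ t = t_node m1 m2 (2 * l)) ->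
           card_eq (S_set rho t) 2))).
Proof.
  intro rho. unfold rho.
  pose proof (Z_gcd_of_nat_coprime m1 m2 hm1 hcop) as hg.
  split.
  - intros [w Hw].
    assert (Ho : Z.Odd (Z.of_nat m1 + Z.of_nat m2)) by (exists (Z.of_nat w); lia).
    split; [now apply minimal_period_odd|].
    intros t Ht. split; [|split].
    + intros [l [_ [Hl ->]]]. now apply case_origin.
    + intros [l [Hl [Hm ->]]]. now apply case_node_odd.
    + now apply case_generic_odd.
  - intros [w Hw].
    assert (Hev : Z.Even (Z.of_nat m1 + Z.of_nat m2)) by (exists (Z.of_nat w); lia).
    split; [now apply minimal_period_even|].
    intros t Ht. split; [|split].
    + intros [l [_ [Hl ->]]]. now apply case_origin.
    + intros [l [Hl [Hm ->]]]. now apply case_node_even.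
    + now apply case_generic_even.
Qed.
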